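(* Let $T$ be a tree. Then for every dominating set $S$ of $T$, $|a(S)|\ge 2\gamma(T)-|S|$.
   Context: A dominating set of a graph $G=(V,E)$ is a set $S\subseteq V$ such that every vertex is in $S$ or adjacent to a vertex of $S$. $\gamma(T)$ denotes the domination number (minimum size of a dominating set). For a dominating set $S$, $a(S)=\{v\in S: S\setminus\{v\}\text{ is not a dominating set}\}$ is the set of critical vertices of $S$. *)

From mathcomp Require Import all_boot.
Set Implicit Arguments. Unset Strict Implicit. Unset Printing Implicit Defensive.

Section Graphs.
Variable T : finType.
Variable e : rel T.

Definition simple_graph : Prop := irreflexive e /\ symmetric e.

Definition connected_graph : Prop := forall x y : T, connect e x y.

Definition acyclic_graph : Prop :=
  forall c : seq T, uniq c -> cycle e c -> size c < 3.

Definition is_tree : Prop := simple_graph /\ connected_graph /\ acyclic_graph.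

Definition dominating (S : {set T}) : bool :=
  [forall v, (v \in S) || [exists u in S, e u v]].

(* domination number: minimum size of a dominating set
   (setT is always dominating, so the default #|T| is never smaller) *)
Definition gamma : nat :=
  \big[minn/#|T|]_(S : {set T} | dominating S) #|S|.

Definition crit (S : {set T}) : {set T} :=
  [set v in S | ~~ dominating (S :\ v)].

End Graphs.

(* Induction on |S|. If every vertex of S is critical, |a(S)| = |S| >= gamma.
   Otherwise it suffices to find a non-critical v in S whose removal makes at
   most one new vertex critical, and to apply induction to S - v.  A vertex u
   that becomes critical when v is removed is reached from v through a "gate"
   w: either w = u is adjacent to v, or w lies outside S, is adjacent to u and
   v and to no other vertex of S; distinct such u have distinct gates.  If
   every non-critical vertex had two new critical vertices, one could always
   leave through a gate other than the vertex one came from, producing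
   arbitrarily long non-backtracking walks; in a forest these are paths. *)

From mathcomp Require Import all_boot all_order zify.
Set Implicit Arguments. Unset Strict Implicit. Unset Printing Implicit Defensive.
Import Order.TTheory.

Lemma gamma_le_card (T : finType) (e : rel T) (S : {set T}) :
  dominating e S -> gamma e <= #|S|.
Proof.
by move=> domS; rewrite /gamma -minEnat; exact: (bigmin_le_cond _ (fun A : {set T} => #|A|) domS).
Qed.

Section Tree.
Variables (T : finType) (e : rel T).
Hypotheses (e_irr : irreflexive e) (e_sym : symmetric e) (e_acyclic : acyclic_graph e).
Implicit Types (A S : {set T}) (p : seq T).

Lemma forest_path_no_chord a b r z :
  path e a (b :: r) -> uniq (a :: b :: r) -> e a z -> z \notin r.
Proof.
move=> pth un eaz; apply/negP => zr; move: pth un; case/splitPr: zr => r1 r2 pth un.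
have {}un : uniq (a :: b :: rcons r1 z).
  by apply: subseq_uniq un; rewrite -cats1 -(cat1s z r2) catA -!cat_cons prefix_subseq.
have cyc : cycle e (a :: b :: rcons r1 z).
  rewrite /cycle rcons_path /= last_rcons (e_sym z) eaz andbT.
  by move: pth; rewrite /= cat_path rcons_path /= => /and4P[-> -> -> _].
by have := e_acyclic un cyc; rewrite /= size_rcons.
Qed.

Lemma simple_path_cons v p y : path e v p -> uniq (v :: p) -> e v y ->
  y != head v p -> path e y (v :: p) && uniq (y :: v :: p).
Proof.
move=> pth un evy yp; rewrite [path _ _ _]/= e_sym evy pth cons_uniq un andbT.
have yv : y != v by apply: contraTneq evy => ->; rewrite e_irr.
case: p pth un yp => [|b r] pth un yb; rewrite !inE ?negb_or yv //=.
by rewrite yb (forest_path_no_chord pth un evy).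
Qed.

Lemma dominating_nbr A y : dominating e A -> y \notin A -> exists2 x, x \in A & e x y.
Proof. by move=> /forallP/(_ y) + yA; rewrite (negbTE yA) => /exists_inP. Qed.

Lemma undominated A : ~~ dominating e A -> exists2 w, w \notin A & {in A, forall x, ~~ e x w}.
Proof.
by rewrite negb_forall => /existsP[w]; rewrite negb_or => /andP[wA /exists_inPn]; exists w.
Qed.

Lemma notin_crit S v : v \in S -> (v \notin crit e S) = dominating e (S :\ v).
Proof. by move=> vS; rewrite inE vS negbK. Qed.

Definition newly_crit S v := crit e (S :\ v) :\: crit e S.

Lemma card_crit_setD1 S v : #|crit e (S :\ v)| <= #|crit e S| + #|newly_crit S v|.
Proof. by rewrite -(cardsID (crit e S)) leq_add2r subset_leq_card // subsetIr. Qed.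

Lemma mem_newly_crit S v u : u \in newly_crit S v ->
  [/\ u \in S :\ v, dominating e (S :\ u) & ~~ dominating e (S :\ v :\ u)].
Proof.
rewrite !inE => /andP[+ /andP[/andP[uv uS] ndom]]; rewrite uS negbK => domSu.
by rewrite uv.
Qed.

Definition gate S v u w : Prop := e v w /\
  (w = u \/ [/\ w \notin S, e w u & {in S, forall x, e x w -> x = u \/ x = v}]).

Lemma newly_crit_gate S v u : dominating e (S :\ v) -> u \in newly_crit S v ->
  exists w, gate S v u w.
Proof.
move=> domSv /mem_newly_crit[/setD1P[uv uS] domSu /undominated[w wSvu nbw]].
have only_uv x : x \in S -> e x w -> x = u \/ x = v.
  move=> xS /(contraTN (@nbw x)); rewrite !in_setD1 xS andbT negb_and !negbK.
  by case/orP=> /eqP; [left | right].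
have vw : w \notin S :\ u -> e v w.
  case/(dominating_nbr domSu) => x /setD1P[xu xS] xw.
  by case: (only_uv x xS xw) => xE; subst x; rewrite ?eqxx in xu.
have uw : w \notin S :\ v -> e u w.
  case/(dominating_nbr domSv) => x /setD1P[xv xS] xw.
  by case: (only_uv x xS xw) => xE; subst x; rewrite ?eqxx in xv.
have [wS|wNS] := boolP (w \in S); last first.
  have wNSx x : w \notin S :\ x by rewrite in_setD1 (negbTE wNS) andbF.
  by exists w; split; [apply: vw | right; split; rewrite // -e_sym; apply: uw].
exists u; split; last by left.
move: wSvu; rewrite !in_setD1 wS andbT negb_and !negbK => /orP[]/eqP wE; subst w.
  by apply: vw; rewrite !inE eqxx.
by rewrite e_sym; apply: uw; rewrite !inE eqxx.
Qed.

Lemma gate_inj S v u1 u2 w : u1 \in S :\ v -> u2 \in S :\ v ->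
  gate S v u1 w -> gate S v u2 w -> u1 = u2.
Proof.
move=> /setD1P[_ u1S] /setD1P[u2v u2S] [_ g1] [_ g2].
case: g1 g2 => [-> [//|[u1S' _ _]]|[wS wu1 only1] [wE|[_ wu2 _]]].
- by rewrite u1S in u1S'.
- by rewrite wE u2S in wS.
by case: (only1 u2 u2S); rewrite 1?e_sym // => u2E; rewrite u2E eqxx in u2v.
Qed.

Lemma gate_path_extend S v u w p : path e v p -> uniq (v :: p) -> u != v ->
  gate S v u w -> w != head v p ->
  exists2 p', size p < size p' & path e u p' && uniq (u :: p').
Proof.
move=> pth un uv [vw wu] wp; have /andP[pthw unw] := simple_path_cons pth un vw wp.
case: wu => [<-|[_ wu _]]; first by exists (v :: p); rewrite ?pthw.
have := simple_path_cons pthw unw wu uv.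
by exists (w :: v :: p) => //=; rewrite ltnS leqnSn.
Qed.

Lemma noncrit_path_extend S v p : dominating e (S :\ v) -> 1 < #|newly_crit S v| ->
  path e v p -> uniq (v :: p) -> exists u p',
  [/\ u \in S, dominating e (S :\ u), size p < size p' & path e u p' && uniq (u :: p')].
Proof.
move=> domSv /card_gt1P[u1 [u2 [u1N u2N u12]]] pth un.
(* Distinct new critical vertices have distinct gates, so one of [u1], [u2] is
   reached without stepping back to the previous vertex [head v p]. *)
have [u [w [uN g wp]]] :
    exists u w, [/\ u \in newly_crit S v, gate S v u w & w != head v p].
  have [w1 g1] := newly_crit_gate domSv u1N; have [w2 g2] := newly_crit_gate domSv u2N.
  have [uSv1 _ _] := mem_newly_crit u1N; have [uSv2 _ _] := mem_newly_crit u2N.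
  have [w1p|w1p] := eqVneq w1 (head v p); last by exists u1, w1.
  exists u2, w2; split; rewrite // -w1p.
  by apply: contra u12 => /eqP w21; rewrite (gate_inj uSv1 uSv2 g1) // -w21.
have [/setD1P[uv uS] domSu _] := mem_newly_crit uN.
have [p' pp' pthu] := gate_path_extend pth un uv g wp.
by exists u, p'.
Qed.

Lemma exists_good_vertex S v0 : v0 \in S -> dominating e (S :\ v0) ->
  exists v, [/\ v \in S, dominating e (S :\ v) & #|newly_crit S v| <= 1].
Proof.
move=> v0S domSv0.
suff /existsP[v /and3P[]] :
    [exists v, [&& v \in S, dominating e (S :\ v) & #|newly_crit S v| <= 1]] by exists v.
apply: contraT; rewrite negb_exists => /forallP bad.
have long n : exists v p,
    [/\ v \in S, dominating e (S :\ v), n <= size p & path e v p && uniq (v :: p)].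
  elim: n => [|n [v [p [vS domSv np /andP[pth un]]]]]; first by exists v0, [::].
  have: 1 < #|newly_crit S v| by move: (bad v); rewrite vS domSv ltnNge.
  move/(noncrit_path_extend domSv)/(_ pth un) => [u [p' [uS domSu pp' pthu]]].
  by exists u, p'; split => //; apply: leq_trans pp'.
have [v [p [_ _ Tp /andP[_ un]]]] := long #|T|.
have := max_card (mem (v :: p)); rewrite (card_uniqP un) /=.
by move/(leq_ltn_trans Tp); rewrite ltnn.
Qed.
End Tree.

Theorem lemma3p4 (T : finType) (e : rel T) :
  is_tree e ->
  forall S : {set T}, dominating e S ->
    2 * gamma e <= #|crit e S| + #|S|.
Proof.
move=> [[e_irr e_sym] [_ e_acyclic]] S.
have [n ltSn] := ubnP #|S|; elim: n S ltSn => // n IH S ltSn domS.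
have [Scrit|/subsetPn[v0 v0S]] := boolP (S \subset crit e S).
  have gS := gamma_le_card domS.
  by rewrite mul2n -addnn leq_add // (leq_trans gS) ?subset_leq_card.
rewrite notin_crit // => domSv0.
have [v [vS domSv few_new]] := exists_good_vertex e_irr e_sym e_acyclic v0S domSv0.
have cardS : #|S| = #|S :\ v|.+1 by rewrite (cardsD1 v) vS.
have /IH/(_ domSv) : #|S :\ v| < n by rewrite -ltnS -cardS.
have := card_crit_setD1 e S v; lia.
Qed.
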